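(* Let $\mathcal A=(\Sigma,Q_\mathcal A,I_\mathcal A,F_\mathcal A,\delta_\mathcal A)$ and $\mathcal B=(\Sigma,Q_\mathcal B,I_\mathcal B,F_\mathcal B,\delta_\mathcal B)$ be NBA and $P=P_{\mathcal A,\mathcal B}(\subseteq^{\mathrm{bw}},\subseteq^{\mathrm f})$. Then $\mathcal L(\mathcal A)\subseteq\mathcal L(\mathcal B)$ if and only if $\mathcal L(\mathrm{Prune}_\mathcal B(\mathcal A,P))\subseteq\mathcal L(\mathcal B)$.
   Context: NBA are forward and backward complete; initial traces start in initial states, fair traces are infinite and visit accepting states infinitely often; the language is the set of infinite words with an initial fair trace. The relations below are on states of the disjoint union of $\mathcal A$ and $\mathcal B$, restricted to $Q_\mathcal A\times Q_\mathcal B$. Backward finite trace inclusion: $p\subseteq^{\mathrm{bw}}q$ iff for every finite word $w$, if there is a finite $w$-trace from an initial state ending in $p$, then there is one from an initial state ending in $q$. Fair trace inclusion: $p\subseteq^{\mathrm f}q$ iff for every infinite word $w$ and infinite $w$-trace from $p$ there is an infinite $w$-trace from $q$ that is fair whenever the former is fair. For $R_b,R_f\subseteq Q_\mathcal A\times Q_\mathcal B$, $P_{\mathcal A,\mathcal B}(R_b,R_f)=\{((p,\sigma,r),(p',\sigma,r'))\in\delta_\mathcal A\times\delta_\mathcal B: p\,R_b\,p',\ r\,R_f\,r'\}$. For $P\subseteq\delta_\mathcal A\times\delta_\mathcal B$, $\mathrm{Prune}_\mathcal B(\mathcal A,P)=(\Sigma,Q_\mathcal A,I_\mathcal A,F_\mathcal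 A,\delta')$ with $\delta'=\{t\in\delta_\mathcal A:\nexists t'\in\delta_\mathcal B,\ (t,t')\in P\}$. *)

From mathcomp Require Import all_boot.
Set Implicit Arguments. Unset Strict Implicit. Unset Printing Implicit Defensive.

Record nba (Sigma Q : finType) := NBA {
  init  : Q -> Prop;
  acc   : Q -> Prop;
  delta : Q -> Sigma -> Q -> Prop }.

Section Defs.
Variables (Sigma : finType).

Definition forward_complete (Q : finType) (A : nba Sigma Q) : Prop :=
  forall (p : Q) (a : Sigma), exists q, delta A p a q.
Definition backward_complete (Q : finType) (A : nba Sigma Q) : Prop :=
  forall (q : Q) (a : Sigma), exists p, delta A p a q.

Definition is_trace (Q : finType) (A : nba Sigma Q) (w : nat -> Sigma) (rho : nat -> Q) : Prop :=
  forall i, delta A (rho i) (w i) (rho i.+1).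

Definition fair (Q : finType) (A : nba Sigma Q) (rho : nat -> Q) : Prop :=
  forall n, exists m, (n <= m)%N /\ acc A (rho m).

Definition lang (Q : finType) (A : nba Sigma Q) (w : nat -> Sigma) : Prop :=
  exists rho, init A (rho 0) /\ is_trace A w rho /\ fair A rho.

Definition lang_incl (QA QB : finType) (A : nba Sigma QA) (B : nba Sigma QB) : Prop :=
  forall w, lang A w -> lang B w.

(* a finite word of length n is w 0 ... w (n-1); [reach A n w q]: there is a
   finite w-trace from an initial state of A ending in q *)
Definition reach (Q : finType) (A : nba Sigma Q) (n : nat) (w : nat -> Sigma) (q : Q) : Prop :=
  exists rho : nat -> Q, init A (rho 0) /\
    (forall i, (i < n)%N -> delta A (rho i) (w i) (rho i.+1)) /\ rho n = q.

(* backward finite trace inclusion, restricted to QA × QB *)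
Definition bw_incl (QA QB : finType) (A : nba Sigma QA) (B : nba Sigma QB) (p : QA) (q : QB) : Prop :=
  forall n w, reach A n w p -> reach B n w q.

(* fair trace inclusion, restricted to QA × QB *)
Definition fair_incl (QA QB : finType) (A : nba Sigma QA) (B : nba Sigma QB) (p : QA) (q : QB) : Prop :=
  forall w rho, is_trace A w rho -> rho 0 = p ->
    exists rho', is_trace B w rho' /\ rho' 0 = q /\ (fair A rho -> fair B rho').

(* P_{A,B}(Rb, Rf) as a relation on pairs of transitions (p,σ,r), (p',σ',r') *)
Definition P_AB (QA QB : finType) (A : nba Sigma QA) (B : nba Sigma QB)
  (Rb Rf : QA -> QB -> Prop) (p : QA) (s : Sigma) (r : QA) (p' : QB) (s' : Sigma) (r' : QB) : Prop :=
  delta A p s r /\ delta B p' s' r' /\ s = s' /\ Rb p p' /\ Rf r r'.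

Definition prune (QA QB : finType) (A : nba Sigma QA) (B : nba Sigma QB)
  (P : QA -> Sigma -> QA -> QB -> Sigma -> QB -> Prop) : nba Sigma QA :=
  NBA (init A) (acc A)
    (fun p s r => delta A p s r /\
       ~ (exists p' s' r', delta B p' s' r' /\ P p s r p' s' r')).
End Defs.

From mathcomp Require Import all_boot.
From mathcomp Require Import zify.
From Stdlib Require Import Classical.

(** Pruning only removes transitions, so one direction is trivial.  Conversely,
    take an accepting run of [A] on [w].  If it uses no pruned transition, it is
    an accepting run of the pruned automaton.  Otherwise it takes some pruned
    transition [(p, w i, r)] at step [i], dominated by a transition [(p', w i, r')]
    of [B] with [p] backward-included in [p'] and [r] fair-included in [r'].
    Backward inclusion gives a run of [B] on [w 0 .. w (i-1)] ending in [p'];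
    fair inclusion gives a fair run of [B] on the rest of [w] from [r'];
    glued along the transition they form an accepting run of [B]. *)

Set Implicit Arguments.
Unset Strict Implicit.
Unset Printing Implicit Defensive.

Definition shiftn (T : Type) (n : nat) (f : nat -> T) : nat -> T :=
  fun k => f (k + n).

Section Runs.
Variables (Sigma Q : finType) (A : nba Sigma Q).

Lemma is_trace_shiftn w rho n :
  is_trace A w rho -> is_trace A (shiftn n w) (shiftn n rho).
Proof. by move=> Ht k; rewrite /shiftn addSn; apply: Ht. Qed.

Lemma fair_shiftn rho n : fair A rho -> fair A (shiftn n rho).
Proof.
move=> Hf m; have [k [Hk Hacc]] := Hf (m + n).
by exists (k - n); rewrite /shiftn subnK; [split=> //; lia | lia].
Qed.

Lemma reach_run w rho n :
  init A (rho 0) -> is_trace A w rho -> reach A n w (rho n).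
Proof. by move=> Hi Ht; exists rho; split=> //; split=> // k _; apply: Ht. Qed.

Lemma reachS n w q r :
  reach A n w q -> delta A q (w n) r -> reach A n.+1 w r.
Proof.
move=> [rho [Hi [Ht <-]]] Hd.
exists (fun k => if (k <= n)%N then rho k else r); split=> //; split; last first.
  by rewrite ltnn.
move=> k; rewrite ltnS => Hkn; rewrite Hkn.
by case: ltnP => [/Ht | Hnk]; last have -> : k = n by lia.
Qed.

Lemma lang_reach_fair_suffix n w q rho :
  reach A n w q -> is_trace A (shiftn n w) rho -> rho 0 = q -> fair A rho ->
  lang A w.
Proof.
move=> [pre [Hi [Hpre Hn]]] Ht H0 Hf.
exists (fun k => if (k < n)%N then pre k else rho (k - n)); split.
  by case: (posnP n) => [n0 | //]; rewrite n0 H0 -Hn n0.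
split.
  move=> k /=; case: (ltngtP k.+1 n) => Hk.
  - by apply: Hpre; lia.
  - have := Ht (k - n); rewrite /shiftn subnK; last lia.
    by have -> : (k.+1 - n = (k - n).+1)%N by lia.
  - by rewrite -Hk subnn H0 -Hn -Hk; apply: Hpre; rewrite -Hk.
move=> m; have [k [Hk Hacc]] := Hf m.
exists (k + n); split; first lia.
by rewrite ltnNge leq_addl /= addnK.
Qed.

End Runs.

Section Pruning.
Variables (Sigma QA QB : finType) (A : nba Sigma QA) (B : nba Sigma QB).

Lemma lang_prune P w : lang (prune A B P) w -> lang A w.
Proof.
move=> [rho [Hi [Ht Hf]]]; exists rho; split=> //; split=> // i.
by case: (Ht i).
Qed.

Lemma lang_prune_run P w rho :
  init A (rho 0) -> is_trace A w rho -> fair A rho ->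
  (forall i p' s' r', delta B p' s' r' -> ~ P (rho i) (w i) (rho i.+1) p' s' r') ->
  lang (prune A B P) w.
Proof.
move=> Hi Ht Hf Hkeep; exists rho; split=> //; split=> // i.
by split; [apply: Ht | move=> [p' [s' [r' [HB HP]]]]; apply: (Hkeep i p' s' r')].
Qed.

Lemma lang_dominated_run w rho i p' s' r' :
  init A (rho 0) -> is_trace A w rho -> fair A rho ->
  P_AB A B (bw_incl A B) (fair_incl A B) (rho i) (w i) (rho i.+1) p' s' r' ->
  lang B w.
Proof.
move=> Hi Ht Hf [_ [HB [Es [Hbw Hfi]]]]; subst s'.
have Hreach : reach B i.+1 w r'.
  by apply: reachS HB; apply: Hbw; apply: reach_run.
have [rho' [Ht' [H0' Hfair']]] :=
  Hfi (shiftn i.+1 w) (shiftn i.+1 rho) (is_trace_shiftn i.+1 Ht) erefl.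
exact: lang_reach_fair_suffix Hreach Ht' H0' (Hfair' (fair_shiftn i.+1 Hf)).
Qed.

End Pruning.

Theorem theorem8p3 (Sigma QA QB : finType) (A : nba Sigma QA) (B : nba Sigma QB)
  (hAf : forward_complete A) (hAb : backward_complete A)
  (hBf : forward_complete B) (hBb : backward_complete B) :
  let P := P_AB A B (bw_incl A B) (fair_incl A B) in
  lang_incl A B <-> lang_incl (prune A B P) B.
Proof.
move=> P; split=> [HAB w /lang_prune | HprB w [rho [Hi [Ht Hf]]]]; first exact: HAB.
have [[i [p' [s' [r' [_ HP]]]]] | Hkeep] :=
  classic (exists i p' s' r', delta B p' s' r' /\ P (rho i) (w i) (rho i.+1) p' s' r').
- exact: lang_dominated_run Hi Ht Hf HP.
- apply: HprB; apply: (lang_prune_run Hi Ht Hf) => i p' s' r' HB HP.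
  by apply: Hkeep; exists i, p', s', r'.
Qed.
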